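(* Let $(e_n)$ be a uniformly quasi-greedy basic sequence in a Banach lattice $X$, with span $E$, quasi-greedy constant $C_{qg}$ and uniform quasi-greedy constant $C^\vee_{qg}$. Then for every $x\in E$ and every ordered set $A=\{n_1,\dots,n_m\}\subseteq\mathrm{supp}(x)$, $$\|P^\vee_A(x)\|\le 8C_{qg}^2C^\vee_{qg}\,\frac{\max\{|e_n^*(x)|:n\in A\}}{\min\{|e_n^*(x)|:n\in A\}}\,\|x\|.$$
   Context: $(e_n)$ is a semi-normalized basic sequence with biorthogonal functionals $e_n^*$, $\mathrm{supp}(x)=\{n:e_n^*(x)\ne0\}$. For $x\in E$, the natural greedy ordering $\rho$ lists indices by non-increasing $|e_n^*(x)|$ (ties broken by increasing index, range containing the support); $\mathcal{G}_m(x)=\sum_{n=1}^m e^*_{\rho(n)}(x)e_{\rho(n)}$, $\mathcal{G}^\vee_m(x)=\bigvee_{n\le m}|\mathcal{G}_n(x)|$. $C_{qg}=\sup_m\sup_{\|x\|=1}\|\mathcal{G}_m(x)\|$ and $C^\vee_{qg}=\sup_m\sup_{\|x\|=1}\|\mathcal{G}^\vee_m(x)\|$; the sequence is uniformly quasi-greedy if $C^\vee_{qg}<\infty$ (which implies $C_{qg}<\infty$). For an ordered finite set $A=\{n_1,\dots,n_m\}\subseteq\mathbb{N}$ (the order being the listed one), $P^\vee_A(x)=\bigvee_{i=1}^m\big|\sum_{k=1}^i e^*_{n_k}(x)e_{n_k}\big|$. *)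

From HB Require Import structures.
From mathcomp Require Import all_boot all_order all_algebra.
From mathcomp Require Import all_classical all_reals all_analysis.
Set Implicit Arguments. Unset Strict Implicit. Unset Printing Implicit Defensive.
Import Order.TTheory GRing.Theory Num.Theory.
Import numFieldNormedType.Exports.
Local Open Scope classical_set_scope.
Local Open Scope ring_scope.

Section BanachLattice.
Variables (R : realType) (X : completeNormedModType R).

Definition is_vector_lattice (le : X -> X -> Prop) (join : X -> X -> X) : Prop :=
  [/\ (forall x, le x x) /\
      (forall x y, le x y -> le y x -> x = y) /\
      (forall x y z, le x y -> le y z -> le x z),
      (forall x y z, le x y -> le (x + z) (y + z)),
      (forall (a : R) x y, 0 <= a -> le x y -> le (a *: x) (a *: y)) &
      (forall x y, [/\ le x (join x y), le y (join x y) &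
                       forall z, le x z -> le y z -> le (join x y) z])].

Definition labs (join : X -> X -> X) (x : X) : X := join x (- x).

Definition is_banach_lattice (le : X -> X -> Prop) (join : X -> X -> X) : Prop :=
  is_vector_lattice le join /\
  (forall x y, le (labs join x) (labs join y) -> `|x| <= `|y|).

Fixpoint supn (join : X -> X -> X) (f : nat -> X) (k : nat) : X :=
  match k with
  | 0 => f 0%N
  | k'.+1 => join (supn join f k') (f k)
  end.

Definition lspan (e : nat -> X) : set X :=
  [set x | exists (N : nat) (c : nat -> R), x = \sum_(i < N) c i *: e i].
Definition clspan (e : nat -> X) : set X := closure (lspan e).

Definition semi_normalized (e : nat -> X) : Prop :=
  exists c C : R, 0 < c /\ forall n, c <= `|e n| <= C.

(* (e_n) is a basic sequence (a Schauder basis of its closed span E) with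
   biorthogonal (coefficient) functionals estar: every x in E has the unique
   expansion x = sum_n estar n x e_n. *)
Definition basic_with_functionals (e : nat -> X) (estar : nat -> X -> R) : Prop :=
  forall x, clspan e x ->
    ((fun N => \sum_(n < N) estar n x *: e n) @ \oo --> x) /\
    (forall a : nat -> R,
        (fun N => \sum_(n < N) a n *: e n) @ \oo --> x -> forall n, a n = estar n x).

Definition supp (estar : nat -> X -> R) (x : X) : set nat :=
  [set n | estar n x != 0].

Definition greedy_lt (estar : nat -> X -> R) (x : X) (n n' : nat) : Prop :=
  `|estar n x| > `|estar n' x| \/ (`|estar n x| = `|estar n' x| /\ (n < n')%N).

Definition natural_greedy_ordering (estar : nat -> X -> R) (x : X)
    (rho : nat -> nat) : Prop :=
  [/\ injective rho,
      (forall i j, (i < j)%N -> greedy_lt estar x (rho i) (rho j)) &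
      (forall n, estar n x != 0 -> exists k, rho k = n)].

Definition greedy_sum (e : nat -> X) (estar : nat -> X -> R) (x : X)
    (rho : nat -> nat) (m : nat) : X :=
  \sum_(k < m) estar (rho k) x *: e (rho k).

(* G^vee_m(x) = \/_{n=1}^m |G_n(x)|, for m >= 1 *)
Definition greedy_vee (join : X -> X -> X) (e : nat -> X) (estar : nat -> X -> R)
    (x : X) (rho : nat -> nat) (m : nat) : X :=
  supn join (fun k => labs join (greedy_sum e estar x rho k.+1)) m.-1.

Definition proj_vee (join : X -> X -> X) (e : nat -> X) (estar : nat -> X -> R)
    (A : seq nat) (x : X) : X :=
  supn join (fun i => labs join
     (\sum_(k < i.+1) estar (nth 0%N A k) x *: e (nth 0%N A k))) (size A).-1.

Definition coef_max (estar : nat -> X -> R) (A : seq nat) (x : X) : R :=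
  \big[Num.max/`|estar (head 0%N A) x|]_(n <- A) `|estar n x|.
Definition coef_min (estar : nat -> X -> R) (A : seq nat) (x : X) : R :=
  \big[Num.min/`|estar (head 0%N A) x|]_(n <- A) `|estar n x|.

End BanachLattice.

From HB Require Import structures.
From mathcomp Require Import all_boot all_order all_algebra.
From mathcomp Require Import all_classical all_reals all_analysis.
From mathcomp Require Import lra.
Import Order.TTheory GRing.Theory Num.Theory.
Import numFieldNormedType.Exports.
Local Open Scope classical_set_scope.
Local Open Scope ring_scope.
Set Implicit Arguments. Unset Strict Implicit. Unset Printing Implicit Defensive.

(* Let a and b be the least and the largest of the |e*_n(x)|, n in A, let eps_n be the
   sign of e*_n(x), and let Lam be the shortest initial segment of the greedy ordering of
   x that contains A, so that |e*_n(x)| >= a on Lam.  Abel summation against the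
   nondecreasing weights 1/|e*_n(x)| along Lam gives |sum_(n in Lam) eps_n e_n| <=
   2 C_qg |x| / a.  For any B included in A, adding to sum_(n in Lam) eps_n e_n a small
   multiple of a vector supported on B makes B, in the order of A, the beginning of the
   greedy ordering, and Abel summation in the lattice bounds the join of the partial sums
   of sum_(n in B) eps_n e_n along A by 2 C^vee_qg |sum_(n in Lam) eps_n e_n|.  Writing
   the coefficients |e*_n(x)| in [a, b] as a layer cake of such indicators yields
   |P^vee_A(x)| <= 4 C_qg C^vee_qg (b / a) |x|, with C_qg >= 1, for finitely supported x;
   the partial sums of the expansion of x extend this to the whole span. *)

Section VectorLattice.
Variables (R : realType) (X : completeNormedModType R).
Variables (le : X -> X -> Prop) (join : X -> X -> X).
Hypothesis HL : is_vector_lattice le join.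

Lemma vle_refl x : le x x.
Proof. by case: HL => [[refl _] _ _ _]. Qed.

Lemma vle_anti x y : le x y -> le y x -> x = y.
Proof. by case: HL => [[_ [anti _]] _ _ _]; apply: anti. Qed.

Lemma vle_trans y x z : le x y -> le y z -> le x z.
Proof. by case: HL => [[_ [_ trans]] _ _ _]; apply: trans. Qed.

Lemma vle_add2r z x y : le x y -> le (x + z) (y + z).
Proof. by case: HL => _ add _ _; apply: add. Qed.

Lemma vle_scale (a : R) x y : 0 <= a -> le x y -> le (a *: x) (a *: y).
Proof. by case: HL => _ _ scale _; apply: scale. Qed.

Lemma vle_joinl x y : le x (join x y).
Proof. by case: HL => _ _ _ /(_ x y) []. Qed.

Lemma vle_joinr x y : le y (join x y).
Proof. by case: HL => _ _ _ /(_ x y) []. Qed.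

Lemma join_vle x y z : le x z -> le y z -> le (join x y) z.
Proof. by case: HL => _ _ _ /(_ x y) [_ _]; apply. Qed.

Lemma vle_add x y x' y' : le x y -> le x' y' -> le (x + x') (y + y').
Proof.
move=> /(vle_add2r x') le_xy /(vle_add2r y) le_x'y'.
by apply: vle_trans le_xy _; rewrite addrC [y + y']addrC.
Qed.

Lemma vle_subr_ge0 x y : le 0 (y - x) -> le x y.
Proof. by move=> /(vle_add2r x); rewrite add0r subrK. Qed.

Lemma vle_scale2r (a b : R) x : a <= b -> le 0 x -> le (a *: x) (b *: x).
Proof.
move=> le_ab x_ge0; apply: vle_subr_ge0; rewrite -scalerBl.
by rewrite -(scaler0 _ (b - a)); apply: vle_scale; rewrite ?subr_ge0.
Qed.

Lemma vle_sum (I : Type) (s : seq I) (F G : I -> X) :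
  (forall i, le (F i) (G i)) -> le (\sum_(i <- s) F i) (\sum_(i <- s) G i).
Proof.
move=> le_FG; elim: s => [|i s IHs]; first by rewrite !big_nil; apply: vle_refl.
by rewrite !big_cons; apply: vle_add.
Qed.

Lemma labs_ge x : le x (labs join x). Proof. exact: vle_joinl. Qed.

Lemma labs_geN x : le (- x) (labs join x). Proof. exact: vle_joinr. Qed.

Lemma labs_ge0 x : le 0 (labs join x).
Proof.
have := vle_add (labs_ge x) (labs_geN x); rewrite subrr -mulr2n -scaler_nat.
move/(@vle_scale 2^-1); rewrite scaler0 scalerA mulVf ?pnatr_eq0 // scale1r.
by apply; rewrite invr_ge0.
Qed.

Lemma labs_add_le x y :
  le (labs join (x + y)) (labs join x + labs join y).
Proof.
apply: join_vle; first exact: vle_add (labs_ge x) (labs_ge y).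
by rewrite opprD; apply: vle_add (labs_geN x) (labs_geN y).
Qed.

Lemma labs_scale_le (a : R) x : le (labs join (a *: x)) (`|a| *: labs join x).
Proof.
have [a_ge0|a_lt0] := leP 0 a.
  rewrite ger0_norm //; apply: join_vle; first exact: vle_scale (labs_ge x).
  by rewrite -scalerN; apply: vle_scale (labs_geN x).
rewrite ltr0_norm //; have Na_ge0 : 0 <= - a by rewrite oppr_ge0 ltW.
apply: join_vle; first by rewrite -[a *: x]opprK -scalerN -scaleNr; apply: vle_scale (labs_geN x).
by rewrite -scaleNr; apply: vle_scale (labs_ge x).
Qed.

Lemma labs0 : labs join 0 = 0.
Proof.
apply: vle_anti (labs_ge0 0).
by apply: join_vle; rewrite ?oppr0; apply: vle_refl.
Qed.

Lemma labs_id x : le 0 x -> labs join x = x.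
Proof.
move=> x_ge0; apply: vle_anti (labs_ge x); apply: join_vle (vle_refl x) _.
by have := vle_add2r (- x) x_ge0; rewrite add0r subrr => /vle_trans; apply.
Qed.

Lemma labs_sum (I : Type) (s : seq I) (F : I -> X) :
  le (labs join (\sum_(i <- s) F i)) (\sum_(i <- s) labs join (F i)).
Proof.
elim: s => [|i s IHs]; first by rewrite !big_nil labs0; apply: vle_refl.
rewrite !big_cons; apply: vle_trans (labs_add_le _ _) _.
exact: vle_add (vle_refl _) IHs.
Qed.

Lemma supn_ge f k i : (i <= k)%N -> le (f i) (supn join f k).
Proof.
elim: k => [|k IHk]; first by rewrite leqn0 => /eqP ->; apply: vle_refl.
rewrite leq_eqVlt => /predU1P[-> | /IHk le_fi]; first exact: vle_joinr.
exact: vle_trans le_fi (vle_joinl _ _).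
Qed.

Lemma supn_le f k z : (forall i, (i <= k)%N -> le (f i) z) -> le (supn join f k) z.
Proof.
elim: k => [|k IHk] le_fz /=; first exact: le_fz.
by apply: join_vle; [apply: IHk => i /leqW; apply: le_fz | apply: le_fz].
Qed.

Lemma eq_supn f g k :
  (forall i, (i <= k)%N -> f i = g i) -> supn join f k = supn join g k.
Proof.
elim: k => [|k IHk] eq_fg /=; first exact: eq_fg.
by rewrite IHk ?eq_fg // => i /leqW; apply: eq_fg.
Qed.

Lemma supn_labs_ge0 f k : le 0 (supn join (fun i => labs join (f i)) k).
Proof. exact: vle_trans (labs_ge0 _) (supn_ge _ (leq0n k)). Qed.

End VectorLattice.

Lemma norm_vle (R : realType) (X : completeNormedModType R) le join (u v : X) :
  is_banach_lattice le join -> le 0 u -> le u v -> `|u| <= `|v|.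
Proof.
move=> [HL lattice_norm] u_ge0 le_uv; apply: lattice_norm.
have v_ge0 : le 0 v := vle_trans HL u_ge0 le_uv.
by rewrite !(labs_id HL).
Qed.

Lemma abel_summation (R : pzRingType) (V : lmodType R) (r : nat -> R) (g : nat -> V) i :
  \sum_(k < i) r k *: g k =
  r i *: \sum_(k < i) g k - \sum_(k < i) (r k.+1 - r k) *: \sum_(l < k.+1) g l.
Proof.
elim: i => [|i IHi]; first by rewrite !big_ord0 scaler0 subr0.
rewrite !big_ord_recr /= IHi scalerBl [_ + (_ - _)]addrC opprD addrA opprB.
by rewrite addrCA subrr addr0 scalerDr addrAC.
Qed.

Section AbelBounds.
Variables (R : realType) (r : nat -> R) (rho : R) (i : nat).
Hypotheses (r_ge0 : forall k, 0 <= r k) (r_nondecr : forall k, r k <= r k.+1)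
  (r_le : forall k, r k <= rho).

Let sum_increments : \sum_(k < i) (r k.+1 - r k) = r i - r 0%N.
Proof. by rewrite -(big_mkord xpredT (fun k => r k.+1 - r k)) telescope_sumr. Qed.

Let abel_weight_le : r i + (r i - r 0%N) <= 2 * rho.
Proof. by have := r_le i; have := r_ge0 0%N; lra. Qed.

Let increment_ge0 k : 0 <= r k.+1 - r k.
Proof. by rewrite subr_ge0. Qed.

Lemma norm_abel_le (X : normedModType R) (g : nat -> X) (M : R) :
  (forall j, (j <= i)%N -> `|\sum_(k < j) g k| <= M) ->
  `|\sum_(k < i) r k *: g k| <= 2 * rho * M.
Proof.
move=> partial_le; have M_ge0 : 0 <= M by apply: le_trans (partial_le 0%N _).
rewrite abel_summation; apply: le_trans (ler_normB _ _) _.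
have increments_le : `|\sum_(k < i) (r k.+1 - r k) *: \sum_(l < k.+1) g l|
    <= \sum_(k < i) (r k.+1 - r k) * M.
  apply: le_trans (ler_norm_sum _ _ _) _; apply: ler_sum => k _.
  by rewrite normrZ ger0_norm // ler_wpM2l // partial_le.
rewrite normrZ ger0_norm //.
apply: le_trans (lerD (ler_wpM2l (r_ge0 i) (partial_le i _)) increments_le) _ => //.
by rewrite -mulr_suml sum_increments -mulrDl ler_wpM2r.
Qed.

Lemma labs_abel_le (X : completeNormedModType R) le join (g : nat -> X) (M : X) :
  is_vector_lattice le join ->
  (forall j, (j <= i)%N -> le (labs join (\sum_(k < j) g k)) M) ->
  le (labs join (\sum_(k < i) r k *: g k)) ((2 * rho) *: M).
Proof.
move=> HL partial_le.
have M_ge0 : le 0 M := vle_trans HL (labs_ge0 HL _) (partial_le 0%N (leq0n _)).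
have scaled_le a j : 0 <= a -> (j <= i)%N ->
    le (labs join (a *: \sum_(k < j) g k)) (a *: M).
  move=> a_ge0 le_ji; apply: (vle_trans HL (labs_scale_le HL _ _)).
  by rewrite ger0_norm //; apply: (vle_scale HL a_ge0 (partial_le j le_ji)).
rewrite abel_summation; apply: (vle_trans HL (labs_add_le HL _ _)).
have increments_le :
    le (labs join (- \sum_(k < i) (r k.+1 - r k) *: \sum_(l < k.+1) g l))
       ((r i - r 0%N) *: M).
  rewrite -scaleN1r; apply: (vle_trans HL (labs_scale_le HL _ _)).
  rewrite normrN normr1 scale1r -sum_increments scaler_suml.
  apply: (vle_trans HL (labs_sum HL _ _)); apply: (vle_sum HL) => k.
  exact: scaled_le.
apply: (vle_trans HL (vle_add HL (scaled_le _ _ (r_ge0 i) (leqnn i)) increments_le)).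
by rewrite -scalerDl; apply: (vle_scale2r HL abel_weight_le M_ge0).
Qed.

End AbelBounds.

Definition partial_vee (R : realType) (X : completeNormedModType R) (join : X -> X -> X)
    (A : seq nat) (P : pred nat) (v : nat -> X) : X :=
  supn join (fun i => labs join (\sum_(n <- take i.+1 A | P n) v n)) (size A).-1.

Lemma has_minimizer (R : realType) (I : eqType) (s : seq I) (P : pred I) (f : I -> R) :
  has P s -> exists2 i, (i \in s) && P i & forall j, j \in s -> P j -> f i <= f j.
Proof.
case/hasP=> i0 i0_s P_i0; set t := \big[Num.min/f i0]_(j <- s | P j) f j.
have [i i_sP f_i] : exists2 i, (i \in s) && P i & f i = t.
  rewrite /t big_seq_cond; elim/big_ind: _ => [|t1 t2 [i1 ? <-] [i2 ? <-]|j ?].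
  - by exists i0; rewrite ?i0_s ?P_i0.
  - by rewrite /Num.min; case: ifP => _; [exists i1 | exists i2].
  - by exists j.
by exists i => // j j_s P_j; rewrite f_i; apply: ge_bigmin_seq.
Qed.

Lemma count_lt_sub (T : eqType) (p q : pred T) (s : seq T) x :
  subpred p q -> x \in s -> q x -> ~~ p x -> (count p s < count q s)%N.
Proof.
move=> le_pq x_s q_x p_x; apply: leq_trans (sub_count (a1 := predU p (pred1 x)) _ _).
  rewrite -(ltn_add2r (count (predI p (pred1 x)) s)) count_predUI.
  rewrite (@eq_count _ (predI p (pred1 x)) pred0) ?count_pred0 ?addn0; last first.
    by move=> y /=; case: (eqVneq y x) => [->|]; rewrite ?andbF ?(negbTE p_x).
  by rewrite -{1}[count p s]addn0 ltn_add2l -has_count; apply/hasP; exists x; rewrite //= eqxx.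
by move=> y /orP[/le_pq | /eqP ->].
Qed.

Section LayerCake.
Variables (R : realType) (X : completeNormedModType R).
Variables (le : X -> X -> Prop) (join : X -> X -> X).
Hypothesis HBL : is_banach_lattice le join.
Variables (A : seq nat) (v : nat -> X) (M : R).
Hypothesis partial_vee_le : forall P : pred nat, `|partial_vee join A P v| <= M.

Let HL : is_vector_lattice le join. Proof. by case: HBL. Qed.

Let partial_vee_ge0 P u : le 0 (partial_vee join A P u).
Proof. exact: supn_labs_ge0. Qed.

Let partial_vee_coef0 (c : nat -> R) :
  (forall n, n \in A -> c n = 0) -> partial_vee join A predT (fun n => c n *: v n) = 0.
Proof.
move=> c0; apply: (vle_anti HL _ (partial_vee_ge0 _ _)); apply: (supn_le HL) => i _.
rewrite big_seq_cond big1 ?(labs0 HL) => [|n /andP[/mem_take n_A _]].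
  exact: (vle_refl HL).
by rewrite c0 ?scale0r.
Qed.

Lemma norm_partial_vee_scale_le (c : nat -> R) b :
  (forall n, n \in A -> 0 <= c n <= b) -> 0 <= b ->
  `|partial_vee join A predT (fun n => c n *: v n)| <= b * M.
Proof.
have M_ge0 : 0 <= M := le_trans (normr_ge0 _) (partial_vee_le predT).
have [k] := ubnP (count (fun n => 0 < c n) A).
elim: k c b => // k IHk c b count_lt c_bound b_ge0.
have [has_pos|no_pos] := boolP (has (fun n => 0 < c n) A); last first.
  rewrite partial_vee_coef0 ?normr0 ?mulr_ge0 // => n n_A.
  have /andP[c_ge0 _] := c_bound n n_A.
  by apply/eqP; rewrite eq_le c_ge0 andbT leNgt (hasPn no_pos).
have [n0 /andP[n0_A t_gt0] t_min] := has_minimizer c has_pos; set t := c n0 in t_gt0 t_min.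
have le_tb : t <= b by have /andP[] := c_bound n0 n0_A.
pose c' n := if 0 < c n then c n - t else 0.
have c'_bound n : n \in A -> 0 <= c' n <= b - t.
  move=> n_A; have /andP[_ le_cb] := c_bound n n_A; rewrite /c'.
  by case: ifP => [/(t_min n n_A) le_tc|_]; apply/andP; split; lra.
have {}count_lt : (count (fun n => (0 < c' n)%R) A < k)%N.
  apply: (leq_trans _ (ltnSE count_lt)).
  apply: (@count_lt_sub _ (fun n => 0 < c' n) (fun n => 0 < c n) _ _ _ n0_A t_gt0).
    by move=> n; rewrite /c'; case: ifP; rewrite // ltxx.
  by rewrite /c' t_gt0 subrr ltxx.
have norm_c' := IHk c' (b - t) count_lt c'_bound (_ : 0 <= b - t).
rewrite subr_ge0 in norm_c'; have {}norm_c' := norm_c' le_tb.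
have split_sum i : \sum_(n <- take i.+1 A) c n *: v n =
    t *: \sum_(n <- take i.+1 A | 0 < c n) v n + \sum_(n <- take i.+1 A) c' n *: v n.
  rewrite [in RHS]big_mkcond scaler_sumr -big_split; apply: eq_big_seq => n /mem_take n_A /=.
  rewrite /c'; case: ifP => [_|c_le0]; first by rewrite -scalerDl addrC subrK.
  have /andP[c_ge0 _] := c_bound n n_A.
  have -> : c n = 0 by apply/eqP; rewrite eq_le c_ge0 leNgt c_le0.
  by rewrite scaler0 !scale0r addr0.
have layer_le : le (partial_vee join A predT (fun n => c n *: v n))
    (t *: partial_vee join A (fun n => 0 < c n) v +
     partial_vee join A predT (fun n => c' n *: v n)).
  apply: (supn_le HL) => i le_i; rewrite split_sum.
  apply: (vle_trans HL (labs_add_le HL _ _)); apply: (vle_add HL); last first.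
    exact: (supn_ge HL (fun i => labs join (\sum_(n <- take i.+1 A) c' n *: v n)) le_i).
  apply: (vle_trans HL (labs_scale_le HL _ _)); rewrite gtr0_norm //.
  exact: (vle_scale HL (ltW t_gt0) (supn_ge HL (fun i => labs join _) le_i)).
apply: le_trans (norm_vle HBL (partial_vee_ge0 _ _) layer_le) _.
apply: le_trans (ler_normD _ _) _; rewrite normrZ gtr0_norm //.
have := ler_wpM2l (ltW t_gt0) (partial_vee_le (fun n => 0 < c n)); lra.
Qed.

End LayerCake.

Section GreedyOrder.
Variables (R : realType) (X : completeNormedModType R) (estar : nat -> X -> R).

Lemma greedy_lt_asym x n n' :
  greedy_lt estar x n n' -> greedy_lt estar x n' n -> False.
Proof.
case=> [lt_nn'|[eq_nn' lt_nn']] [lt_n'n|[eq_n'n lt_n'n]].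
- by have := lt_trans lt_nn' lt_n'n; rewrite ltxx.
- by move: lt_nn'; rewrite eq_n'n ltxx.
- by move: lt_n'n; rewrite eq_nn' ltxx.
- by have := ltn_trans lt_nn' lt_n'n; rewrite ltnn.
Qed.

Lemma natural_greedy_ordering_prefix x rho (s : seq nat) :
  natural_greedy_ordering estar x rho -> uniq s ->
  (forall n, n \in s -> estar n x != 0) ->
  (forall j j', (j < j' < size s)%N ->
     greedy_lt estar x (nth 0%N s j) (nth 0%N s j')) ->
  (forall n j, n \notin s -> (j < size s)%N -> greedy_lt estar x (nth 0%N s j) n) ->
  forall j, (j < size s)%N -> rho j = nth 0%N s j.
Proof.
move=> [rho_inj rho_lt rho_onto] s_uniq s_supp s_sorted s_first.
elim/ltn_ind => i IHi lt_is.
have nth_inj l : (l < i)%N -> rho l = nth 0%N s i -> False.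
  move=> lt_li; rewrite (IHi l lt_li (ltn_trans lt_li lt_is)) => /eqP.
  by rewrite nth_uniq ?(ltn_trans lt_li) // => /eqP eq_li; rewrite eq_li ltnn in lt_li.
have [k rho_k] := rho_onto _ (s_supp _ (mem_nth 0%N lt_is)).
have [lt_ki|lt_ik|eq_ki] := ltngtP k i; last by rewrite -rho_k eq_ki.
  by case: (nth_inj k lt_ki rho_k).
have lt_rho_i : greedy_lt estar x (rho i) (nth 0%N s i) by rewrite -rho_k; apply: rho_lt.
have [rho_i_s|rho_i_notin_s] := boolP (rho i \in s); last first.
  by case: (greedy_lt_asym lt_rho_i (s_first _ _ rho_i_notin_s lt_is)).
have lt_ls : (index (rho i) s < size s)%N by rewrite index_mem.
have nth_l := nth_index 0%N rho_i_s.
have [lt_li|lt_il|eq_li] := ltngtP (index (rho i) s) i; last by rewrite -{1}nth_l eq_li.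
- have := IHi _ lt_li (ltn_trans lt_li lt_is); rewrite nth_l => /rho_inj eq_li.
  by rewrite eq_li ltnn in lt_li.
- have := s_sorted _ _ (introT andP (conj lt_il lt_ls)); rewrite nth_l.
  by move/(greedy_lt_asym lt_rho_i).
Qed.

Definition greedy_le (d : nat -> R) : rel nat := fun n n' =>
  (`|d n'| < `|d n|) || ((`|d n| == `|d n'|) && (n <= n')%N).

Lemma greedy_le_total d : total (greedy_le d).
Proof.
move=> n n'; rewrite /greedy_le.
by have [| |_] := ltgtP `|d n| `|d n'|; rewrite ?orbT //= leq_total.
Qed.

Lemma greedy_le_trans d : transitive (greedy_le d).
Proof.
move=> n' n n''; rewrite /greedy_le.
case/orP=> [lt1|/andP[/eqP eq1 le1]] /orP[lt2|/andP[/eqP eq2 le2]].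
- by rewrite (lt_trans lt2 lt1).
- by rewrite -eq2 lt1.
- by rewrite eq1 lt2.
- by rewrite eq1 eq2 eqxx (leq_trans le1 le2) orbT.
Qed.

Definition greedy_sort (d : nat -> R) N := sort (greedy_le d) (iota 0 N).

Definition greedy_order (d : nat -> R) N (j : nat) : nat :=
  if (j < N)%N then nth 0%N (greedy_sort d N) j else j.

Lemma size_greedy_sort d N : size (greedy_sort d N) = N.
Proof. by rewrite size_sort size_iota. Qed.

Lemma greedy_sort_uniq d N : uniq (greedy_sort d N).
Proof. by rewrite sort_uniq iota_uniq. Qed.

Lemma mem_greedy_sort d N n : (n \in greedy_sort d N) = (n < N)%N.
Proof. by rewrite mem_sort mem_iota. Qed.

Lemma index_greedy_sort_lt d N n : (n < N)%N -> (index n (greedy_sort d N) < N)%N.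
Proof. by move=> lt_nN; rewrite -{2}(size_greedy_sort d N) index_mem mem_greedy_sort. Qed.

Lemma greedy_order_index d N n :
  (n < N)%N -> greedy_order d N (index n (greedy_sort d N)) = n.
Proof.
move=> lt_nN; rewrite /greedy_order index_greedy_sort_lt //.
by rewrite nth_index // mem_greedy_sort.
Qed.

Lemma greedy_order_lt d N j : (j < N)%N -> (greedy_order d N j < N)%N.
Proof.
by move=> lt_jN; rewrite /greedy_order lt_jN -(mem_greedy_sort d) mem_nth ?size_greedy_sort.
Qed.

Lemma greedy_order_id d N j : (N <= j)%N -> greedy_order d N j = j.
Proof. by move=> le_Nj; rewrite /greedy_order ltnNge le_Nj. Qed.

Lemma greedy_order_inj d N : injective (greedy_order d N).
Proof.
move=> i j; have [lt_iN|le_Ni] := ltnP i N; have [lt_jN|le_Nj] := ltnP j N.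
- rewrite /greedy_order lt_iN lt_jN => /eqP.
  by rewrite nth_uniq ?size_greedy_sort ?greedy_sort_uniq // => /eqP.
- by move=> eq_ij; have := greedy_order_lt d lt_iN; rewrite eq_ij greedy_order_id // ltnNge le_Nj.
- by move=> eq_ij; have := greedy_order_lt d lt_jN; rewrite -eq_ij greedy_order_id // ltnNge le_Ni.
- by rewrite !greedy_order_id.
Qed.

Lemma big_greedy_order (V : nmodType) d N (F : nat -> V) :
  \sum_(j < N) F (greedy_order d N j) = \sum_(n < N) F n.
Proof.
rewrite (eq_bigr (fun j : 'I_N => F (nth 0%N (greedy_sort d N) j))); last first.
  by move=> j _; rewrite /greedy_order ltn_ord.
rewrite -(big_mkord xpredT (F \o nth 0%N _)) -{1}(size_greedy_sort d N).
rewrite -(big_nth 0%N xpredT F) -(big_mkord xpredT F).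
by apply: perm_big; rewrite /index_iota subn0 perm_sort perm_refl.
Qed.

Lemma greedy_sort_nonincr d N i j : (i <= j < N)%N ->
  `|d (nth 0%N (greedy_sort d N) j)| <= `|d (nth 0%N (greedy_sort d N) i)|.
Proof.
case/andP=> le_ij lt_jN; have lt_iN := leq_ltn_trans le_ij lt_jN.
have refl : reflexive (greedy_le d) by move=> n; rewrite /greedy_le eqxx leqnn orbT.
have := sorted_leq_nth (@greedy_le_trans d) refl 0%N (sort_sorted (greedy_le_total d) (iota 0 N)).
rewrite -/(greedy_sort _ N) => /(_ i j); rewrite !inE size_greedy_sort.
by move=> /(_ lt_iN lt_jN le_ij) /orP[/ltW | /andP[/eqP -> _]].
Qed.

Lemma greedy_sort_lt x N i j : (i < j < N)%N ->
  greedy_lt estar x (nth 0%N (greedy_sort (estar^~ x) N) i)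
                    (nth 0%N (greedy_sort (estar^~ x) N) j).
Proof.
case/andP=> lt_ij lt_jN; have lt_iN := ltn_trans lt_ij lt_jN.
have := sorted_ltn_nth (@greedy_le_trans (estar^~ x)) 0%N
  (sort_sorted (greedy_le_total (estar^~ x)) (iota 0 N)).
rewrite -/(greedy_sort _ N) => /(_ i j); rewrite !inE size_greedy_sort.
move=> /(_ lt_iN lt_jN lt_ij).
have : nth 0%N (greedy_sort (estar^~ x) N) i != nth 0%N (greedy_sort (estar^~ x) N) j.
  by rewrite nth_uniq ?size_greedy_sort ?greedy_sort_uniq // neq_ltn lt_ij.
rewrite /greedy_le => neq_ij /orP[lt_abs|/andP[/eqP eq_abs le_ij]]; first by left.
by right; rewrite eq_abs ltn_neqAle neq_ij le_ij.
Qed.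

Lemma greedy_order_natural x N : (forall n, (N <= n)%N -> estar n x = 0) ->
  natural_greedy_ordering estar x (greedy_order (estar^~ x) N).
Proof.
move=> x_vanish; split; first exact: greedy_order_inj.
- move=> i j lt_ij; have [lt_jN|le_Nj] := ltnP j N.
    by rewrite /greedy_order lt_jN (ltn_trans lt_ij lt_jN); apply: greedy_sort_lt; rewrite lt_ij.
  rewrite /greedy_lt (greedy_order_id _ le_Nj) (x_vanish j) // normr0.
  have [le_Ni|lt_iN] := leqP N i; first by right; rewrite greedy_order_id // x_vanish // normr0.
  have [->|nz] := eqVneq (estar (greedy_order (estar^~ x) N i) x) 0.
    by right; rewrite normr0; split => //; apply: leq_trans (greedy_order_lt _ lt_iN) le_Nj.
  by left; rewrite normr_gt0.
- move=> n nz_n; exists (index n (greedy_sort (estar^~ x) N)); apply: greedy_order_index.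
  by rewrite ltnNge; apply: contra nz_n => /x_vanish ->.
Qed.

End GreedyOrder.

Lemma sum_take_nth (V : nmodType) (s : seq nat) (F : nat -> V) J :
  (J <= size s)%N -> \sum_(n <- take J s) F n = \sum_(k < J) F (nth 0%N s k).
Proof.
move=> le_Js; rewrite (big_nth 0%N) size_take_min (minn_idPl le_Js) big_mkord.
by apply: eq_bigr => k _; rewrite nth_take.
Qed.

Lemma big_seq_ord (V : nmodType) (s : seq nat) N (F : nat -> V) :
  uniq s -> (forall n, n \in s -> (n < N)%N) ->
  \sum_(n <- s) F n = \sum_(n < N) (if nat_of_ord n \in s then F n else 0).
Proof.
move=> s_uniq s_lt; rewrite -big_mkcond -(big_mkord (fun n => n \in s)) -big_filter.
symmetry; apply: perm_big; apply: uniq_perm; rewrite ?filter_uniq ?iota_uniq // => n.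
by rewrite mem_filter mem_index_iota; apply: andb_idr => /s_lt.
Qed.

Lemma filter_take_prefix (P : pred nat) (A : seq nat) k :
  exists2 J, (J <= size (seq.filter P A))%N & seq.filter P (take k A) = take J (seq.filter P A).
Proof.
elim: A k => [|a A IHA] [|k] /=; try by exists 0%N; rewrite ?take0.
have [J le_J ->] := IHA k; case: (P a) => /=; first by exists J.+1.
by exists J.
Qed.

Section Expansion.
Variables (R : realType) (X : completeNormedModType R).
Variables (e : nat -> X) (estar : nat -> X -> R).
Hypothesis basic : basic_with_functionals e estar.

Lemma clspan_sum (c : nat -> R) N : clspan e (\sum_(k < N) c k *: e k).
Proof. by apply: subset_closure; exists N, c. Qed.

Lemma coef_sum (c : nat -> R) N n :
  estar n (\sum_(k < N) c k *: e k) = if (n < N)%N then c n else 0.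
Proof.
have [_ expansion_unique] := basic (@clspan_sum c N).
apply/esym/(expansion_unique (fun k => if (k < N)%N then c k else 0)).
apply: cvg_near_cst; near=> M.
have le_NM : (N <= M)%N by near: M; exists N.
rewrite (big_ord_widen _ (fun k => c k *: e k) le_NM) [RHS]big_mkcond; apply: eq_bigr => k _.
by case: ifP; rewrite ?scale0r.
Unshelve. all: by end_near.
Qed.

Lemma coef0 n : estar n 0 = 0.
Proof. by have := coef_sum (fun=> 0) 0 n; rewrite big_ord0. Qed.

Section FiniteSupport.
Variables (s : seq nat) (N : nat).
Hypotheses (s_uniq : uniq s) (s_lt : forall n, n \in s -> (n < N)%N).

Let sum_seq_ord (c : nat -> R) :
  \sum_(k <- s) c k *: e k = \sum_(k < N) (if nat_of_ord k \in s then c k else 0) *: e k.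
Proof.
rewrite (big_seq_ord _ s_uniq s_lt); apply: eq_bigr => k _.
by case: ifP; rewrite ?scale0r.
Qed.

Lemma clspan_sum_seq (c : nat -> R) : clspan e (\sum_(k <- s) c k *: e k).
Proof.
by rewrite (sum_seq_ord c); exact: (@clspan_sum (fun k => if k \in s then c k else 0) N).
Qed.

Lemma coef_sum_seq (c : nat -> R) n :
  estar n (\sum_(k <- s) c k *: e k) = if n \in s then c n else 0.
Proof.
rewrite (sum_seq_ord c) (coef_sum (fun k => if k \in s then c k else 0)).
case: ltnP => // le_Nn.
by case: ifP => // /s_lt; rewrite ltnNge le_Nn.
Qed.

End FiniteSupport.

Lemma expansion_vanish x N : clspan e x -> (forall n, (N <= n)%N -> estar n x = 0) ->
  x = \sum_(n < N) estar n x *: e n.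
Proof.
move=> x_E x_vanish; have [partial_cvg _] := basic x_E.
have partial_stationary : (fun M => \sum_(n < M) estar n x *: e n) @ \oo -->
    \sum_(n < N) estar n x *: e n.
  apply: cvg_near_cst; near=> M; have le_NM : (N <= M)%N by near: M; exists N.
  rewrite (big_ord_widen _ (fun n => estar n x *: e n) le_NM) [RHS]big_mkcond.
  by apply: eq_bigr => n _; case: ltnP => // /x_vanish ->; rewrite scale0r.
exact: norm_cvg_unique partial_cvg partial_stationary.
Unshelve. all: by end_near.
Qed.

End Expansion.

Section QuasiGreedy.
Variables (R : realType) (X : completeNormedModType R).
Variables (e : nat -> X) (estar : nat -> X -> R) (Cqg : R).
Hypothesis quasi_greedy : forall x rho m, clspan e x -> natural_greedy_ordering estar x rho ->
  `|greedy_sum e estar x rho m| <= Cqg * `|x|.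

Lemma norm_greedy_signs_le x N L a :
  clspan e x -> (forall n, (N <= n)%N -> estar n x = 0) -> (L <= N)%N -> 0 < a ->
  (forall n, n \in take L (greedy_sort (estar^~ x) N) -> a <= `|estar n x|) ->
  `|\sum_(n <- take L (greedy_sort (estar^~ x) N)) Num.sg (estar n x) *: e n|
    <= 2 * a^-1 * (Cqg * `|x|).
Proof.
move=> x_E x_vanish le_LN a_gt0 large_coef.
set rho := greedy_order (estar^~ x) N; set c := fun j => estar (rho j) x.
have rho_nth j : (j < L)%N -> rho j = nth 0%N (greedy_sort (estar^~ x) N) j.
  by move=> lt_jL; rewrite /rho /greedy_order (leq_trans lt_jL le_LN).
have c_ge j : (j < L)%N -> a <= `|c j|.
  move=> lt_jL; rewrite /c rho_nth // -(nth_take _ lt_jL); apply/large_coef/mem_nth.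
  by rewrite size_take_min leq_min lt_jL size_greedy_sort (leq_trans lt_jL le_LN).
have c_gt0 j : (j < L)%N -> 0 < `|c j| by move=> /c_ge; apply: lt_le_trans.
have c_nonincr i j : (i <= j < L)%N -> `|c j| <= `|c i|.
  case/andP=> le_ij lt_jL; rewrite /c !rho_nth ?(leq_ltn_trans le_ij) //.
  by apply: (greedy_sort_nonincr (estar^~ x)); rewrite le_ij (leq_trans lt_jL).
pose r k := if (k < L)%N then `|c k|^-1 else a^-1.
rewrite sum_take_nth ?size_greedy_sort //.
rewrite (eq_bigr (fun j : 'I_L => r j *: (c j *: e (rho j)))); last first.
  move=> j _; rewrite /r ltn_ord scalerA -rho_nth // {2}[c j]numEsg mulrCA.
  by rewrite mulVf ?mulr1 // lt0r_neq0 ?c_gt0.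
apply: (norm_abel_le _ _ _ (g := fun j => c j *: e (rho j))) => [k|k|k|j _].
- by rewrite /r; case: ifP; rewrite invr_ge0 ?normr_ge0 ?ltW.
- rewrite /r; case: (ltnP k.+1 L) => [lt_k1L|le_Lk1].
    by rewrite (ltnW lt_k1L) lef_pV2 ?posrE ?c_gt0 ?c_nonincr ?leqnSn // ltnW.
  by case: ifP => // lt_kL; rewrite lef_pV2 ?posrE ?c_gt0 ?c_ge.
- by rewrite /r; case: ifP => // lt_kL; rewrite lef_pV2 ?posrE ?c_gt0 ?c_ge.
- exact: quasi_greedy x_E (greedy_order_natural x_vanish).
Qed.

End QuasiGreedy.

Lemma ler_addpM_gt0 (R : realType) (x y z : R) :
  (forall d, 0 < d -> x <= y + d * z) -> x <= y.
Proof.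
move=> le_xy; apply/ler_addgt0Pr => eps eps_gt0.
have z1_gt0 : 0 < `|z| + 1 := ltr_wpDl (normr_ge0 z) ltr01.
have d_gt0 : 0 < eps / (`|z| + 1) by rewrite divr_gt0.
apply: le_trans (le_xy _ d_gt0) _; rewrite lerD2l.
apply: le_trans (ler_wpM2l (ltW d_gt0) (ler_norm z)) _.
by rewrite mulrAC ler_pdivrMr // ler_pM2l // lerDl.
Qed.

Section UniformlyQuasiGreedy.
Variables (R : realType) (X : completeNormedModType R).
Variables (e : nat -> X) (estar : nat -> X -> R).
Variables (le : X -> X -> Prop) (join : X -> X -> X) (Cvqg : R).
Hypotheses (basic : basic_with_functionals e estar) (HBL : is_banach_lattice le join).
Hypothesis uniformly_quasi_greedy : forall x rho m, clspan e x ->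
  natural_greedy_ordering estar x rho -> (0 < m)%N ->
  `|greedy_vee join e estar x rho m| <= Cvqg * `|x|.
Hypothesis Cvqg_ge0 : 0 <= Cvqg.

Variables (L : seq nat) (N : nat) (sg : nat -> R) (A : seq nat) (P : pred nat).
Hypotheses (L_uniq : uniq L) (L_lt : forall n, n \in L -> (n < N)%N).
Hypotheses (sg_unit : forall n, n \in L -> `|sg n| = 1).
Hypotheses (A_uniq : uniq A) (A_sub : {subset A <= L}).

Let HL : is_vector_lattice le join. Proof. by case: HBL. Qed.

Let s := seq.filter P A.

Let s_uniq : uniq s. Proof. exact: filter_uniq. Qed.

Let s_sub : {subset s <= L}.
Proof. by move=> n; rewrite mem_filter => /andP[_ /A_sub]. Qed.

(* Adding [d * weight] to the moduli of the signs puts [s], in the order of [A], at the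
   beginning of the greedy ordering while moving the vector by only [O(d)]. *)
Let weight n : R := ((n \in s) * (size s - index n s))%:R.

Let weight_ge0 n : 0 <= weight n. Proof. exact: ler0n. Qed.

Let weight_nth k : (k < size s)%N -> weight (nth 0%N s k) = (size s - k)%:R.
Proof. by move=> lt_ks; rewrite /weight mem_nth // (index_uniq 0%N lt_ks s_uniq) mul1n. Qed.

Let perturbed d := \sum_(n <- L) (sg n * (1 + d * weight n)) *: e n.

Let coef_perturbed d n :
  estar n (perturbed d) = if n \in L then sg n * (1 + d * weight n) else 0.
Proof. exact: (coef_sum_seq basic L_uniq L_lt). Qed.

Let perturbed_clspan d : clspan e (perturbed d).
Proof. exact: (clspan_sum_seq L_uniq L_lt). Qed.

Let perturbed_vanish d n : (N <= n)%N -> estar n (perturbed d) = 0.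
Proof.
by move=> le_Nn; rewrite coef_perturbed; case: ifP => // /L_lt; rewrite ltnNge le_Nn.
Qed.

Let abs_coef_perturbed d n : 0 <= d -> n \in L ->
  `|estar n (perturbed d)| = 1 + d * weight n.
Proof.
move=> d_ge0 n_L; rewrite coef_perturbed n_L normrM sg_unit // mul1r ger0_norm //.
by rewrite addr_ge0 ?mulr_ge0.
Qed.

Let rho d := greedy_order (estar^~ (perturbed d)) N.

Lemma greedy_order_perturbed d : 0 < d ->
  forall j, (j < size s)%N -> rho d j = nth 0%N s j.
Proof.
move=> d_gt0; have d_ge0 := ltW d_gt0.
have abs_coef_s k : (k < size s)%N ->
    `|estar (nth 0%N s k) (perturbed d)| = 1 + d * (size s - k)%:R.
  by move=> lt_ks; rewrite abs_coef_perturbed ?weight_nth // s_sub ?mem_nth.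
apply: natural_greedy_ordering_prefix s_uniq _ _ _.
- exact: greedy_order_natural (perturbed_vanish d).
- move=> n n_s; rewrite -normr_eq0 abs_coef_perturbed ?s_sub // gt_eqF //.
  by rewrite ltr_pwDl ?mulr_ge0.
- move=> j j' /andP[lt_jj' lt_j's]; left; rewrite !abs_coef_s ?(ltn_trans lt_jj') //.
  by rewrite ltrD2l ltr_pM2l // ltr_nat; apply: ltn_sub2l (ltn_trans lt_jj' lt_j's) lt_jj'.
- move=> n j n_s lt_js; left; rewrite abs_coef_s //.
  apply: le_lt_trans (_ : 1 < _); last by rewrite ltrDl mulr_gt0 // ltr0n subn_gt0.
  rewrite coef_perturbed; case: ifP => n_L; last by rewrite normr0.
  by rewrite /weight (negbTE n_s) mulr0 addr0 mulr1 sg_unit.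
Qed.

Lemma partial_vee_signs_le_greedy_vee d : 0 < d ->
  le (partial_vee join A P (fun n => sg n *: e n))
     (2 *: greedy_vee join e estar (perturbed d) (rho d) (size s).+1).
Proof.
move=> d_gt0; have d_ge0 := ltW d_gt0; set vee := greedy_vee _ _ _ _ _ _.
pose g k := estar (nth 0%N s k) (perturbed d) *: e (nth 0%N s k).
pose r k := (1 + d * (size s - k)%:R)^-1.
have r_den_gt0 k : 0 < 1 + d * (size s - k)%:R by rewrite ltr_pwDl ?mulr_ge0.
have partial_g j : (j <= size s)%N -> le (labs join (\sum_(k < j) g k)) vee.
  move=> le_js; have -> : \sum_(k < j) g k = greedy_sum e estar (perturbed d) (rho d) j.
    by apply: eq_bigr => k _; rewrite /g greedy_order_perturbed // (leq_trans _ le_js).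
  case: j le_js => [|j] le_js.
    by rewrite /greedy_sum big_ord0 (labs0 HL); apply: supn_labs_ge0.
  exact: (supn_ge HL (fun k => labs join (greedy_sum e estar _ _ k.+1)) (ltnW le_js)).
apply: (supn_le HL) => i _; rewrite -big_filter.
have [J le_Js ->] := filter_take_prefix P A i.+1.
rewrite -/s sum_take_nth // (eq_bigr (fun k : 'I_J => r k *: g k)); last first.
  move=> k _; have lt_ks := leq_trans (ltn_ord k) le_Js.
  rewrite /g scalerA coef_perturbed s_sub ?mem_nth // weight_nth // mulrCA.
  by rewrite mulVf ?mulr1 // gt_eqF.
rewrite -[2]mulr1; apply: (labs_abel_le (r := r) _ _ _ HL) => [k|k|k|j le_jJ].
- by rewrite invr_ge0 ltW.
- by rewrite lef_pV2 ?posrE // lerD2l ler_wpM2l // ler_nat leq_sub2l.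
- by rewrite invr_le1 ?unitfE ?gt_eqF // lerDl mulr_ge0.
- exact: partial_g (leq_trans le_jJ le_Js).
Qed.

Lemma norm_partial_vee_signs_le :
  `|partial_vee join A P (fun n => sg n *: e n)| <= 2 * Cvqg * `|\sum_(n <- L) sg n *: e n|.
Proof.
set Y := \sum_(n <- L) (sg n * weight n) *: e n.
apply: (@ler_addpM_gt0 _ _ _ (2 * Cvqg * `|Y|)) => d d_gt0.
have perturbedE : perturbed d = \sum_(n <- L) sg n *: e n + d *: Y.
  rewrite /perturbed /Y scaler_sumr -big_split /=; apply: eq_bigr => n _.
  by rewrite scalerA -scalerDl mulrDr mulr1 [d * _]mulrCA.
have vee_le := uniformly_quasi_greedy (@perturbed_clspan d)
  (greedy_order_natural (perturbed_vanish d)) (ltn0Sn (size s)).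
have perturbed_le : `|perturbed d| <= `|\sum_(n <- L) sg n *: e n| + d * `|Y|.
  by rewrite perturbedE; apply: le_trans (ler_normD _ _) _; rewrite normrZ gtr0_norm.
apply: le_trans (norm_vle HBL (supn_labs_ge0 HL _ _) (partial_vee_signs_le_greedy_vee d_gt0)) _.
have := ler_wpM2l Cvqg_ge0 perturbed_le; rewrite normrZ ger0_norm //; lra.
Qed.

End UniformlyQuasiGreedy.

Section FiniteExpansion.
Variables (R : realType) (X : completeNormedModType R).
Variables (le : X -> X -> Prop) (join : X -> X -> X).
Variables (e : nat -> X) (estar : nat -> X -> R) (Cqg Cvqg : R).
Hypotheses (HBL : is_banach_lattice le join) (basic : basic_with_functionals e estar).
Hypothesis quasi_greedy : forall x rho m, clspan e x -> natural_greedy_ordering estar x rho ->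
  `|greedy_sum e estar x rho m| <= Cqg * `|x|.
Hypothesis uniformly_quasi_greedy : forall x rho m, clspan e x ->
  natural_greedy_ordering estar x rho -> (0 < m)%N ->
  `|greedy_vee join e estar x rho m| <= Cvqg * `|x|.
Variables (x : X) (N : nat).
Hypotheses (x_E : clspan e x) (x_vanish : forall n, (N <= n)%N -> estar n x = 0).

Lemma quasi_greedy_const_ge1 : x != 0 -> 1 <= Cqg.
Proof.
move=> x_neq0; have := @quasi_greedy _ _ N x_E (greedy_order_natural x_vanish).
rewrite /greedy_sum (big_greedy_order _ _ (fun n => estar n x *: e n)).
rewrite -(expansion_vanish basic x_E x_vanish).
by rewrite -{1}[`|x|]mul1r ler_pM2r ?normr_gt0.
Qed.

Lemma uniformly_quasi_greedy_const_ge0 : x != 0 -> 0 <= Cvqg.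
Proof.
move=> x_neq0.
have := @uniformly_quasi_greedy _ _ 1 x_E (greedy_order_natural x_vanish) (ltn0Sn 0).
by move/(le_trans (normr_ge0 _)); rewrite pmulr_lge0 ?normr_gt0.
Qed.

Lemma norm_proj_vee_le_finite (A : seq nat) :
  A != [::] -> uniq A -> {subset A <= [pred n | estar n x != 0]} ->
  `|proj_vee join e estar A x|
    <= 8 * Cqg ^+ 2 * Cvqg * (coef_max estar A x / coef_min estar A x) * `|x|.
Proof.
move=> A_neq0 A_uniq A_supp; have HL : is_vector_lattice le join by case: HBL.
set a := coef_min estar A x; set b := coef_max estar A x.
have coef_gt0 n : n \in A -> 0 < `|estar n x| by move/A_supp; rewrite inE normr_gt0.
have head_A : head 0%N A \in A.
  by case: A A_neq0 {a b A_uniq A_supp coef_gt0} => // n A _; apply: mem_head.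
have a_gt0 : 0 < a.
  by rewrite /a /coef_min big_seq_cond; apply: lt_bigmin => [|n /andP[n_A _]]; apply: coef_gt0.
have a_le n : n \in A -> a <= `|estar n x| by move=> n_A; apply: ge_bigmin_seq.
have le_b n : n \in A -> `|estar n x| <= b by move=> n_A; apply: le_bigmax_seq n_A _.
have b_ge0 : 0 <= b := le_trans (normr_ge0 _) (le_b _ head_A).
have x_neq0 : x != 0.
  by have := A_supp _ head_A; rewrite inE; apply: contra => /eqP ->; rewrite (coef0 basic).
have Cqg_ge1 := quasi_greedy_const_ge1 x_neq0.
have Cvqg_ge0 := uniformly_quasi_greedy_const_ge0 x_neq0.
have A_lt n : n \in A -> (n < N)%N.
  by move=> /A_supp; rewrite inE ltnNge; apply: contra => /x_vanish ->.
set srt := greedy_sort (estar^~ x) N.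
have srt_A n : n \in A -> n \in srt by move=> /A_lt; rewrite mem_greedy_sort.
set L := \max_(n <- A) (index n srt).+1; set Lam := take L srt.
have le_LN : (L <= N)%N.
  by apply/bigmax_leqP_seq => n n_A _; apply/index_greedy_sort_lt/A_lt.
have Lam_uniq : uniq Lam by apply/take_uniq/greedy_sort_uniq.
have Lam_lt n : n \in Lam -> (n < N)%N by move/mem_take; rewrite mem_greedy_sort.
have A_Lam : {subset A <= Lam}.
  move=> n n_A; rewrite /Lam in_take ?srt_A //.
  exact: (leq_bigmax_seq (F := fun m => (index m srt).+1) n n_A).
have Lam_large n : n \in Lam -> a <= `|estar n x|.
  move=> n_Lam; have n_srt : n \in srt by apply: mem_take n_Lam.
  have [m m_A le_nm] : exists2 m, m \in A & (index n srt <= index m srt)%N.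
    apply/hasP; move: n_Lam; rewrite /Lam in_take //; apply: contraLR.
    by move/hasPn => lt_m; rewrite -leqNgt; apply/bigmax_leqP_seq => m /lt_m; rewrite -ltnNge.
  apply: le_trans (a_le m m_A) _; rewrite -{1}(nth_index 0%N n_srt) -(nth_index 0%N (srt_A m m_A)).
  apply: (greedy_sort_nonincr (estar^~ x)); rewrite le_nm /=.
  by apply: index_greedy_sort_lt; apply: A_lt.
pose sg n := Num.sg (estar n x).
have sg_unit n : n \in Lam -> `|sg n| = 1.
  by move=> /Lam_large le_a; rewrite normr_sg -normr_gt0 (lt_le_trans a_gt0 le_a).
have signs_le := norm_greedy_signs_le quasi_greedy x_E x_vanish le_LN a_gt0 Lam_large.
have vee_le P := norm_partial_vee_signs_le basic HBL uniformly_quasi_greedy Cvqg_ge0 P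
  Lam_uniq Lam_lt sg_unit A_uniq A_Lam.
have -> : proj_vee join e estar A x =
    partial_vee join A predT (fun n => `|estar n x| *: (sg n *: e n)).
  apply: (eq_supn join) => i le_i; congr (labs join _).
  have size_A_gt0 : (0 < size A)%N by rewrite lt0n size_eq0.
  rewrite sum_take_nth; last by rewrite -(prednK size_A_gt0) ltnS.
  by apply: eq_bigr => k _; rewrite scalerA mulrC -numEsg.
set M := 2 * Cvqg * (2 / a * (Cqg * `|x|)).
apply: le_trans (norm_partial_vee_scale_le HBL (M := M) _ (b := b) _ _) _.
- by move=> P; apply: le_trans (vee_le P) _; apply: ler_wpM2l; rewrite ?mulr_ge0.
- by move=> n n_A; rewrite normr_ge0 le_b.
- exact: b_ge0.
have Q_ge0 : 0 <= Cvqg * b / a * `|x| * Cqg.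
  by rewrite !mulr_ge0 ?invr_ge0 ?(ltW a_gt0) ?(le_trans ler01 Cqg_ge1).
have Cqg_sub1_ge0 : 0 <= Cqg - 1 by rewrite subr_ge0.
have := mulr_ge0 Q_ge0 Cqg_sub1_ge0; rewrite /M expr2; lra.
Qed.

End FiniteExpansion.

Section CoefficientsOnA.
Variables (R : realType) (X : completeNormedModType R) (estar : nat -> X -> R).
Variables (A : seq nat) (x y : X).
Hypothesis eq_xy : {in A, forall n, estar n x = estar n y}.

Let eq_head : A != [::] -> estar (head 0%N A) x = estar (head 0%N A) y.
Proof. by case: A eq_xy => // n A' eq_nA _; apply: eq_nA; rewrite mem_head. Qed.

Lemma eq_proj_vee join e : A != [::] -> proj_vee join e estar A x = proj_vee join e estar A y.
Proof.
move=> A_neq0; apply: eq_supn => i le_i; congr (labs join _); apply: eq_bigr => k _.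
rewrite eq_xy // mem_nth // (leq_trans (ltn_ord k)) //.
by rewrite -(prednK (_ : 0 < size A)%N) ?ltnS // lt0n size_eq0.
Qed.

Lemma eq_coef_max : A != [::] -> coef_max estar A x = coef_max estar A y.
Proof. by move=> A_neq0; rewrite /coef_max eq_head //; apply: eq_big_seq => n /eq_xy ->. Qed.

Lemma eq_coef_min : A != [::] -> coef_min estar A x = coef_min estar A y.
Proof. by move=> A_neq0; rewrite /coef_min eq_head //; apply: eq_big_seq => n /eq_xy ->. Qed.

End CoefficientsOnA.

Unset Implicit Arguments.

Theorem corollary3p24 (R : realType) (X : completeNormedModType R)
  (le : X -> X -> Prop) (join : X -> X -> X)
  (e : nat -> X) (estar : nat -> X -> R) (Cqg Cvqg : R) :
  is_banach_lattice le join ->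
  semi_normalized e ->
  basic_with_functionals e estar ->
  (* C_qg bounds the greedy sums *)
  (forall x rho m, clspan e x -> natural_greedy_ordering estar x rho ->
     `|greedy_sum e estar x rho m| <= Cqg * `|x|) ->
  (* uniformly quasi-greedy with constant C^vee_qg *)
  (forall x rho m, clspan e x -> natural_greedy_ordering estar x rho -> (0 < m)%N ->
     `|greedy_vee join e estar x rho m| <= Cvqg * `|x|) ->
  forall (x : X) (A : seq nat),
    clspan e x -> A != [::] -> uniq A -> {subset A <= [pred n | estar n x != 0]} ->
    `|proj_vee join e estar A x|
      <= 8 * Cqg ^+ 2 * Cvqg * (coef_max estar A x / coef_min estar A x) * `|x|.
Proof.
move=> HBL _ basic quasi_greedy uniformly_quasi_greedy x A x_E A_neq0 A_uniq A_supp.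
set K := 8 * Cqg ^+ 2 * Cvqg * _.
pose y N := \sum_(n < N) estar n x *: e n.
have [partial_cvg _] := basic x x_E.
have bound_cvg : K * `|y N| @[N --> \oo] --> K * `|x|.
  by apply: cvgMr; apply: cvg_norm.
apply: (cvgr_to_ge bound_cvg).
set N0 := \max_(n <- A) n.+1.
have A_lt n : n \in A -> (n < N0)%N by move=> n_A; apply: (leq_bigmax_seq (F := succn) n n_A).
near=> N; have le_N0N : (N0 <= N)%N by near: N; exists N0.
have coef_y n : estar n (y N) = if (n < N)%N then estar n x else 0.
  exact: (coef_sum basic (estar^~ x)).
have eq_xy : {in A, forall n, estar n x = estar n (y N)}.
  by move=> n n_A; rewrite coef_y (leq_trans (A_lt n n_A) le_N0N).
rewrite (eq_proj_vee eq_xy) // /K (eq_coef_max eq_xy) // (eq_coef_min eq_xy) //.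
have y_E : clspan e (y N) := @clspan_sum _ _ e (estar^~ x) N.
have y_vanish n : (N <= n)%N -> estar n (y N) = 0 by rewrite coef_y ltnNge => ->.
have y_supp : {subset A <= [pred n | estar n (y N) != 0]}.
  by move=> n n_A; rewrite inE -eq_xy //; apply: A_supp.
exact: (norm_proj_vee_le_finite HBL basic quasi_greedy uniformly_quasi_greedy
  y_E y_vanish A_neq0 A_uniq y_supp).
Unshelve. all: by end_near.
Qed.
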